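(* For each $k\in\mathbb{N}$ let $S_k$ be a nonempty set of setfunctions on $(\,[k],2^{[k]})$, and assume that $S=\bigcup_k S_k$ is quotient-closed and has the common lift property. Then there are setfunctions $\varphi_k\in S_k$ ($k\in\mathbb{N}$) such that $(\varphi_n\colon n\in\mathbb{N})$ is a tower and, for every $k$, $\bigcup_n Q_k(\varphi_n)$ is a dense subset of $S_k$.
   Context: A setfunction on a set-algebra $(J,\mathcal{B})$ is a map $\varphi\colon\mathcal{B}\to\mathbb{R}$ with $\varphi(\emptyset)=0$; $[k]=\{1,\dots,k\}$, $\mathbb{N}$ the positive integers. For a measurable map $F\colon J\to[k]$, the quotient $\varphi\circ F^{-1}$ is the setfunction $A\mapsto\varphi(F^{-1}(A))$ on $2^{[k]}$; $Q_k(\varphi)\subseteq\mathbb{R}^{2^k}$ is the set of all quotients of $\varphi$ on $[k]$. $\varphi$ is a lift of $\varphi'$ if $\varphi'$ is a quotient of $\varphi$. A family $A$ of finite setfunctions is quotient-closed if every quotient of a member of $A$ is in $A$, and has the common lift property if every finite subset of $A$ has a common lift in $A$. A tower is a sequence $(\varphi_n)$ of setfunctions on finite set-algebras $(J_n,2^{J_n})$ such that $\varphi_n$ is a quotient of $\varphi_{n+1}$ for every $n$. Density is with respect to the Euclidean topology of $\mathbb{R}^{2^k}$. *)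

From HB Require Import structures.
From mathcomp Require Import all_boot all_order all_algebra.
From mathcomp Require Import reals.
From Stdlib Require List.
Set Implicit Arguments. Unset Strict Implicit. Unset Printing Implicit Defensive.
Import Order.TTheory GRing.Theory Num.Theory.
Local Open Scope ring_scope.

Definition sfun (R : realType) (k : nat) := {ffun {set 'I_k} -> R}.

Definition is_setfun (R : realType) (k : nat) (phi : sfun R k) : Prop :=
  phi set0 = 0.

Definition quot (R : realType) (m k : nat) (F : 'I_m -> 'I_k) (phi : sfun R m)
  : sfun R k := [ffun A : {set 'I_k} => phi (F @^-1: A)].

Definition is_quot (R : realType) (m k : nat) (phi : sfun R m) (psi : sfun R k)
  : Prop := exists F : 'I_m -> 'I_k, psi = quot F phi.

(* S k is the family S_k (meaningful for k >= 1); S = union_k S_k. *)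
Definition quotient_closed (R : realType) (S : forall k, sfun R k -> Prop) :=
  forall m k (phi : sfun R m) (F : 'I_m -> 'I_k),
    (0 < m)%N -> (0 < k)%N -> S m phi -> S k (quot F phi).

Definition common_lift_property (R : realType) (S : forall k, sfun R k -> Prop) :=
  forall s : seq {k : nat & sfun R k},
    (forall p, List.In p s -> (0 < projT1 p)%N /\ S (projT1 p) (projT2 p)) ->
    exists m, exists psi : sfun R m, [/\ (0 < m)%N, S m psi &
      forall p, List.In p s -> is_quot psi (projT2 p)].

Definition is_tower (R : realType) (phi : forall n, sfun R n) :=
  forall n, (0 < n)%N -> is_quot (phi n.+1) (phi n).

(* \bigcup_{n>=1} Q_k(phi_n) is a dense subset of S_k (Euclidean topology of
   R^{2^k}, expressed with the equivalent max-norm). *)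
Definition dense_quotients_in (R : realType) (k : nat)
    (phi : forall n, sfun R n) (Sk : sfun R k -> Prop) :=
  (forall n (F : 'I_n -> 'I_k), (0 < n)%N -> Sk (quot F (phi n))) /\
  (forall psi, Sk psi -> forall eps : R, 0 < eps ->
     exists n, exists F : 'I_n -> 'I_k, (0 < n)%N /\
       forall A : {set 'I_k}, `|quot F (phi n) A - psi A| < eps).
Arguments dense_quotients_in {R} k phi Sk.

From HB Require Import structures.
From mathcomp Require Import all_boot all_order all_algebra.
From mathcomp Require Import reals.
From mathcomp Require Import zify lra.
From Stdlib Require Import ClassicalEpsilon.
Import Order.TTheory GRing.Theory Num.Theory.
Local Open Scope ring_scope.
Set Implicit Arguments. Unset Strict Implicit. Unset Printing Implicit Defensive.

(* Each S_k has a countable dense subset (one member of S_k in every nonempty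
   cell of a grid of mesh 1/(c+1)), so all these points, for all k, can be
   listed in one sequence D.  Repeated common lifts give setfunctions Psi_s on
   N_s points, 1 = N_0 < N_1 < ..., with Psi_{s+1} lifting D s, and Psi_s the
   quotient of Psi_{s+1} along a retraction of [N_{s+1}] onto its first N_s
   points (the lift is placed on fresh points).  The retractions give every
   point y > 0 a parent < y; sending each point to its first ancestor below n
   collapses all Psi_s with N_s >= n to the same setfunction phi_n on n points.
   Then (phi_n) is a tower through every Psi_s, and each D s is a quotient of
   phi_{N_{s+1}} = Psi_{s+1}, which gives density. *)

Section IndexQuotient.
Variable R : realType.

(* Quotient along a map given on indices; points sent outside [k] are dropped,
   so no bound proof is needed to form it. *)
Definition quotn m k (f : nat -> nat) (phi : sfun R m) : sfun R k :=
  [ffun A : {set 'I_k} => phi [set x : 'I_m | f x \in image val A]].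

Lemma quotnE {m k} {f : nat -> nat} {F : 'I_m -> 'I_k} {phi : sfun R m} :
  (forall x : 'I_m, f x = F x) -> quotn k f phi = quot F phi.
Proof.
move=> fF; apply/ffunP => A; rewrite !ffunE; congr (phi _).
by apply/setP => x; rewrite !inE fF mem_image //; apply: val_inj.
Qed.

Lemma quotn_is_quot {m k} {f : nat -> nat} {phi : sfun R m} :
  (forall x : 'I_m, f x < k)%N -> is_quot phi (quotn k f phi).
Proof. by move=> fk; exists (fun x => Ordinal (fk x)); apply: quotnE. Qed.

Lemma eq_quotn {m k} {f g : nat -> nat} {phi : sfun R m} :
  (forall x : 'I_m, f x = g x) -> quotn k f phi = quotn k g phi.
Proof.
move=> fg; apply/ffunP => A; rewrite !ffunE; congr (phi _).
by apply/setP => x; rewrite !inE fg.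
Qed.

Lemma quotn_id {m} {f : nat -> nat} {phi : sfun R m} :
  (forall x : 'I_m, f x = x) -> quotn m f phi = phi.
Proof.
move=> fE; rewrite (quotnE (F := id)) //.
by apply/ffunP => A; rewrite ffunE; congr (phi _); apply/setP => x; rewrite !inE.
Qed.

Lemma quotn_comp {m l k} {f g : nat -> nat} {phi : sfun R m} :
  (forall x : 'I_m, f x < l)%N -> quotn k g (quotn l f phi) = quotn k (g \o f) phi.
Proof.
move=> fl; apply/ffunP => A; rewrite !ffunE; congr (phi _).
apply/setP => x; rewrite !inE.
by rewrite -[f x]/(val (Ordinal (fl x))) mem_image ?inE //; apply: val_inj.
Qed.

Lemma quot_comp {m l k} (G : 'I_m -> 'I_l) (F : 'I_l -> 'I_k) (phi : sfun R m) :
  quot F (quot G phi) = quot (F \o G) phi.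
Proof.
apply/ffunP => A; rewrite !ffunE; congr (phi _).
by apply/setP => x; rewrite !inE.
Qed.

Lemma is_quot_trans m l k (phi : sfun R m) (psi : sfun R l) (chi : sfun R k) :
  is_quot phi psi -> is_quot psi chi -> is_quot phi chi.
Proof. by move=> [G ->] [F ->]; exists (F \o G); rewrite quot_comp. Qed.

End IndexQuotient.

Section Climb.
Variable parent : nat -> nat.
Hypothesis parent_lt : forall y, (0 < y)%N -> (parent y < y)%N.

(* The first ancestor of [y] below [n]: [y] steps suffice since [parent]
   decreases. *)
Definition climb (n y : nat) : nat :=
  iter y (fun z => if (z < n)%N then z else parent z) y.

Section Level.
Variable n : nat.
Hypothesis n_gt0 : (0 < n)%N.

Let step z := if (z < n)%N then z else parent z.

Lemma iter_climb_lt k y : (y <= k)%N -> (iter k step y < n)%N.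
Proof.
elim: k y => [|k IHk] y; first by rewrite leqn0 => /eqP ->.
move=> le_yk; rewrite iterSr; have [lt_yn|le_ny] := ltnP y n.
  by rewrite [step y]/step lt_yn iter_fix // /step lt_yn.
have -> : step y = parent y by rewrite /step ltnNge le_ny.
apply: IHk.
by rewrite -ltnS (leq_trans (parent_lt (leq_trans n_gt0 le_ny))).
Qed.

Lemma iter_climb k y : (y <= k)%N -> iter k step y = climb n y.
Proof.
move=> le_yk; rewrite /climb -(subnK le_yk) iterD iter_fix //.
by rewrite /step iter_climb_lt.
Qed.

Lemma climb_lt y : (climb n y < n)%N.
Proof. exact: iter_climb_lt. Qed.

Lemma climb_small y : (y < n)%N -> climb n y = y.
Proof. by move=> lt_yn; rewrite /climb iter_fix // lt_yn. Qed.

Lemma climb_parent y : (n <= y)%N -> climb n y = climb n (parent y).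
Proof.
move=> le_ny; have y_gt0 := leq_trans n_gt0 le_ny.
rewrite /climb -(prednK y_gt0) iterSr prednK // -/step /step ltnNge le_ny.
by apply: iter_climb; rewrite -ltnS prednK // parent_lt.
Qed.

End Level.

Lemma climbK n m y : (0 < n)%N -> (n <= m)%N -> climb n (climb m y) = climb n y.
Proof.
move=> n_gt0 le_nm; elim/ltn_ind: y => y IHy.
have [lt_ym|le_my] := ltnP y m; first by rewrite (climb_small lt_ym).
have le_ny := leq_trans le_nm le_my.
rewrite (climb_parent (leq_trans n_gt0 le_nm) le_my) (climb_parent n_gt0 le_ny).
by apply/IHy/parent_lt; rewrite (leq_trans n_gt0 le_ny).
Qed.

End Climb.

Definition is_retraction (n m : nat) (r : nat -> nat) :=
  (forall y, (y < n)%N -> r y = y) /\ (forall y, (y < m)%N -> (r y < n)%N).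

Definition retraction_chain (R : realType) (N : nat -> nat) (r : nat -> nat -> nat)
    (Psi : forall s, sfun R (N s)) :=
  [/\ N 0 = 1%N, forall s, (N s < N s.+1)%N,
      forall s, is_retraction (N s) (N s.+1) (r s)
    & forall s, quotn (N s) (r s) (Psi s.+1) = Psi s].
Arguments retraction_chain {R} N r Psi.

Section TowerOfChain.
Variables (R : realType) (N : nat -> nat) (r : nat -> nat -> nat).
Variable Psi : forall s, sfun R (N s).
Hypothesis chain : retraction_chain N r Psi.

Let N0 : N 0 = 1%N. Proof. by case: chain. Qed.
Let N_lt s : (N s < N s.+1)%N. Proof. by case: chain. Qed.
Let r_id s y : (y < N s)%N -> r s y = y.
Proof. by case: chain => _ _ /(_ s)[id_r _] _; apply: id_r. Qed.
Let r_lt s y : (y < N s.+1)%N -> (r s y < N s)%N.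
Proof. by case: chain => _ _ /(_ s)[_ lt_r] _; apply: lt_r. Qed.
Let Psi_r s : quotn (N s) (r s) (Psi s.+1) = Psi s. Proof. by case: chain. Qed.

Let N_gt s : (s < N s)%N.
Proof. by elim: s => [|s IHs]; rewrite ?N0 // (leq_ltn_trans IHs (N_lt s)). Qed.

Let N_gt0 s : (0 < N s)%N. Proof. exact: leq_ltn_trans (leq0n s) (N_gt s). Qed.

Let N_mono : {homo N : s t / (s <= t)%N}.
Proof. exact: homo_leq leqnn leq_trans (fun s => ltnW (N_lt s)). Qed.

Definition stage (y : nat) : nat := find (fun s => (y < N s.+1)%N) (iota 0 y.+1).

Lemma stage_spec y : (0 < y)%N -> (N (stage y) <= y < N (stage y).+1)%N.
Proof.
move=> y_gt0; have has_stage : has (fun s => (y < N s.+1)%N) (iota 0 y.+1).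
  by apply/hasP; exists y; rewrite ?mem_iota //= (ltn_trans (N_gt y) (N_lt y)).
have lt_stage : (stage y < y.+1)%N by rewrite -(size_iota 0 y.+1) -has_find.
have := nth_find 0 has_stage; rewrite -/(stage y) nth_iota // add0n => ->.
rewrite andbT; case E: (stage y) => [|t]; first by rewrite N0.
have lt_t : (t < stage y)%N by rewrite E.
have := before_find 0 lt_t; rewrite nth_iota ?add0n ?(ltn_trans lt_t) //.
by move/negbT; rewrite -leqNgt.
Qed.

Lemma stage_unique s y : (N s <= y < N s.+1)%N -> stage y = s.
Proof.
case/andP=> le_Nsy lt_yNs; have y_gt0 := leq_trans (N_gt0 s) le_Nsy.
have /andP[le_Nty lt_yNt] := stage_spec y_gt0.
case: (ltngtP (stage y) s) => // [lt_ts|lt_st].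
  by move: (leq_trans lt_yNt (N_mono lt_ts)); rewrite ltnNge le_Nsy.
by move: (leq_trans lt_yNs (N_mono lt_st)); rewrite ltnNge le_Nty.
Qed.

Definition parent (y : nat) : nat := r (stage y) y.

Lemma parent_lt y : (0 < y)%N -> (parent y < y)%N.
Proof.
by move=> /stage_spec /andP[le_Ny lt_yN]; rewrite (leq_trans (r_lt lt_yN) le_Ny).
Qed.

Lemma climb_stage s y : (y < N s.+1)%N -> climb parent (N s) y = r s y.
Proof.
move=> lt_yNs.
have [lt_yN|le_Ny] := ltnP y (N s); first by rewrite climb_small ?r_id.
rewrite (climb_parent parent_lt (N_gt0 s) le_Ny) /parent.
by rewrite (@stage_unique s y) ?le_Ny // climb_small // r_lt.
Qed.

Lemma quotn_climb_succ n s : (0 < n)%N -> (n <= N s)%N ->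
  quotn n (climb parent n) (Psi s.+1) = quotn n (climb parent n) (Psi s).
Proof.
move=> n_gt0 le_nN; rewrite -[in RHS]Psi_r.
rewrite -(eq_quotn (fun x => climb_stage (ltn_ord x))).
rewrite quotn_comp => [|x]; last exact: (climb_lt parent_lt).
by apply: eq_quotn => x; rewrite /= (climbK parent_lt _ n_gt0 le_nN).
Qed.

Lemma quotn_climb_stage n s t : (0 < n)%N -> (n <= N s)%N -> (s <= t)%N ->
  quotn n (climb parent n) (Psi t) = quotn n (climb parent n) (Psi s).
Proof.
move=> n_gt0 le_nN; elim: t => [|t IHt]; first by rewrite leqn0 => /eqP ->.
rewrite leq_eqVlt => /predU1P[-> //|lt_st].
by rewrite quotn_climb_succ ?IHt // (leq_trans le_nN (N_mono _)).
Qed.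

Definition tower (n : nat) : sfun R n := quotn n (climb parent n) (Psi n).

Lemma tower_stage s : tower (N s) = Psi s.
Proof.
rewrite /tower (quotn_climb_stage (N_gt0 s) (leqnn _) (ltnW (N_gt s))).
by apply: quotn_id => x; rewrite climb_small.
Qed.

Lemma tower_quot n : (0 < n)%N -> is_quot (Psi n) (tower n).
Proof. by move=> n_gt0; apply: quotn_is_quot => x; exact: (climb_lt parent_lt). Qed.

Lemma tower_is_tower : is_tower tower.
Proof.
move=> n n_gt0; suff -> : tower n = quotn n (climb parent n) (tower n.+1).
  by apply: quotn_is_quot => x; exact: (climb_lt parent_lt).
rewrite /tower quotn_comp => [|x]; last exact: (climb_lt parent_lt).
rewrite -(quotn_climb_stage n_gt0 (ltnW (N_gt n)) (leqnSn n)).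
by apply: eq_quotn => x; rewrite /= (climbK parent_lt _ n_gt0 (leqnSn n)).
Qed.

End TowerOfChain.

Lemma dependent_choice_seq (T : Type) (I : T -> Prop) (step : nat -> T -> T -> Prop)
    (x0 : T) :
  I x0 -> (forall s x, I x -> exists2 y, I y & step s x y) ->
  exists f : nat -> T, f 0 = x0 /\ forall s, I (f s) /\ step s (f s) (f s.+1).
Proof.
move=> Ix0 stepP.
have /choice[g gP] : forall sx : nat * T,
    exists y, I sx.2 -> I y /\ step sx.1 sx.2 y.
  move=> [s x]; have [Ix|nIx] := classic (I x); last by exists x.
  by have [y Iy sxy] := stepP s x Ix; exists y.
pose f := fix f s := if s is s'.+1 then g (s', f s') else x0.
have If s : I (f s) by elim: s => //= s /(gP (s, _)) [].
by exists f; split => // s; split => //; exact: (gP (s, f s) (If s)).2.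
Qed.

Section Lifting.
Variables (R : realType) (S : forall k, sfun R k -> Prop).
Arguments S : clear implicits.
Hypotheses (qc : quotient_closed S) (clp : common_lift_property S).

Lemma lift_with_retraction n k (Psi : sfun R n) (tau : sfun R k) :
  (0 < n)%N -> S n Psi -> (0 < k)%N -> S k tau ->
  exists m (Psi' : sfun R m) (r : nat -> nat),
    [/\ (n < m)%N, S m Psi', is_retraction n m r, quotn n r Psi' = Psi
      & is_quot Psi' tau].
Proof.
move=> n_gt0 SPsi k_gt0 Stau.
have in_S p : List.In p [:: existT _ n Psi; existT _ k tau] ->
    (0 < projT1 p)%N /\ S _ (projT2 p).
  by move=> /= [<-|[<-|[]]].
have [l [psi [l_gt0 Spsi lifts]]] := clp in_S.
have [G /= PsiE] := lifts _ (or_introl erefl).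
have /= psi_tau := lifts _ (or_intror (or_introl erefl)).
pose g x := if insub x is Some i then val (G i) else 0%N.
have gE (x : 'I_l) : g x = G x by rewrite /g valK.
pose Psi' := quotn (n + l) (addn n) psi.
have shift_lt (x : 'I_l) : (n + x < n + l)%N by rewrite ltn_add2l.
exists (n + l)%N, Psi', (fun y => if (y < n)%N then y else g (y - n)%N); split.
- by rewrite -[X in (X < _)%N]addn0 ltn_add2l.
- rewrite /Psi'; have [F ->] := quotn_is_quot (phi := psi) shift_lt.
  by apply: qc; rewrite // addn_gt0 n_gt0.
- split=> y; first by move->.
  by case: ifP => // _ _; rewrite /g; case: insub => [i|] //=; apply: ltn_ord.
- rewrite quotn_comp // PsiE -(quotnE gE).
  by apply: eq_quotn => x /=; rewrite ltnNge leq_addr addKn.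
- apply: is_quot_trans psi_tau.
  have -> : psi = quotn l (subn^~ n) Psi'.
    by rewrite quotn_comp // quotn_id // => x /=; rewrite addKn.
  by apply: quotn_is_quot => x /=; have := ltn_ord x; lia.
Qed.

Lemma exists_retraction_chain (D : nat -> {k : nat & sfun R k}) (phi1 : sfun R 1) :
  (forall s, (0 < projT1 (D s))%N /\ S _ (projT2 (D s))) -> S 1 phi1 ->
  exists N r (Psi : forall s, sfun R (N s)), retraction_chain N r Psi /\
    forall s, [/\ (0 < N s)%N, S (N s) (Psi s) & is_quot (Psi s.+1) (projT2 (D s))].
Proof.
move=> D_in S1.
pose I (x : {n : nat & sfun R n}) := (0 < projT1 x)%N /\ S _ (projT2 x).
pose step s (x y : {n : nat & sfun R n}) :=
  [/\ (projT1 x < projT1 y)%N,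
       exists r, is_retraction (projT1 x) (projT1 y) r /\
                 quotn _ r (projT2 y) = projT2 x
     & is_quot (projT2 y) (projT2 (D s))].
have [f [f0 fP]] : exists f : nat -> {n : nat & sfun R n},
    f 0 = existT _ 1%N phi1 /\ forall s, I (f s) /\ step s (f s) (f s.+1).
  apply: dependent_choice_seq => // s [n Psi] [n_gt0 SPsi].
  have [k_gt0 Stau] := D_in s.
  have [m [Psi' [r [lt_nm SPsi' retr PsiE tauQ]]]] :=
    lift_with_retraction n_gt0 SPsi k_gt0 Stau.
  exists (existT _ m Psi'); last by split => //; exists r.
  by rewrite /I /= (leq_trans n_gt0 (ltnW lt_nm)).
have /choice[r rP] : forall s, exists r,
    is_retraction (projT1 (f s)) (projT1 (f s.+1)) r /\
    quotn _ r (projT2 (f s.+1)) = projT2 (f s).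
  by move=> s; have [_ [_ ? _]] := fP s.
exists (fun s => projT1 (f s)), r, (fun s => projT2 (f s)); split.
  by split; rewrite ?f0 // => s; [have [_ []] := fP s | case: (rP s) | case: (rP s)].
by move=> s; have [[? ?] [_ _ ?]] := fP s.
Qed.

End Lifting.

Section Density.
Variable R : realType.

Lemma floor_eq_dist (a b : R) : Num.floor a = Num.floor b -> `|a - b| < 1.
Proof.
move=> eq_ab; have := floor_le a; have := floorD1_gt a.
have := floor_le b; have := floorD1_gt b.
rewrite eq_ab intrD ltr_norml; set z : R := _%:~R => *.
by apply/andP; split; lra.
Qed.

Definition cell (T : finType) (c : nat) (f : {ffun T -> R}) : {ffun T -> int} :=
  [ffun x => Num.floor (f x * c.+1%:R)].

Lemma same_cell_dist (T : finType) c (f g : {ffun T -> R}) x :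
  cell c f = cell c g -> `|f x - g x| < c.+1%:R^-1.
Proof.
move/ffunP/(_ x); rewrite !ffunE => /floor_eq_dist.
have c_gt0 : 0 < c.+1%:R :> R by rewrite ltr0n.
by rewrite -mulrBl normrM (gtr0_norm c_gt0) -ltr_pdivlMr // div1r.
Qed.

Lemma countable_dense_subset (T : finType) (P : {ffun T -> R} -> Prop) :
  (exists f, P f) -> exists d : nat -> {ffun T -> R}, (forall i, P (d i)) /\
    forall f, P f -> forall eps, 0 < eps -> exists i, forall x, `|d i x - f x| < eps.
Proof.
move=> [f0 Pf0].
pose in_cell i (f : {ffun T -> R}) :=
  if unpickle i is Some (c, q) then cell c f = q else True.
have /choice[d dP] : forall i, exists g,
    P g /\ ((exists f, P f /\ in_cell i f) -> in_cell i g).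
  move=> i; have [[f [Pf fi]]|no_f] := classic (exists f, P f /\ in_cell i f).
    by exists f.
  by exists f0; split => // /no_f.
exists d; split=> [i|f Pf eps eps_gt0]; first by case: (dP i).
have [c lt_c] : exists c : nat, c.+1%:R^-1 < eps.
  exists (Num.bound eps^-1).
  rewrite invf_plt ?posrE ?ltr0n //.
  by apply: lt_trans (archi_boundP _) _; rewrite ?ltr_nat // invr_ge0 ltW.
exists (pickle (c, cell c f)) => x.
have : in_cell (pickle (c, cell c f)) (d (pickle (c, cell c f))).
  by apply: (dP _).2; exists f; rewrite /in_cell pickleK.
rewrite /in_cell pickleK => /same_cell_dist lt_d.
exact: lt_trans (lt_d x) lt_c.
Qed.

Lemma exists_dense_enumeration (P : forall k, sfun R k -> Prop) :
  (forall k, (0 < k)%N -> exists phi, P k phi) ->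
  exists D : nat -> {k : nat & sfun R k},
    (forall s, (0 < projT1 (D s))%N /\ P _ (projT2 (D s))) /\
    forall k psi, (0 < k)%N -> P k psi -> forall eps, 0 < eps ->
      exists s phi, D s = existT _ k phi /\ forall A, `|phi A - psi A| < eps.
Proof.
move=> P_ne.
have dk k := countable_dense_subset (P_ne k.+1 isT).
pose d k := proj1_sig (constructive_indefinite_description _ (dk k)).
have dP k := proj2_sig (constructive_indefinite_description _ (dk k)).
pose D s := let: (k, i) := odflt (0, 0)%N (unpickle s) in existT (sfun R) k.+1 (d k i).
exists D; split.
  by move=> s; rewrite /D; case: (odflt _ _) => k i; split => //; apply: (dP k).1.
move=> [//|k] psi _ Ppsi eps eps_gt0; have [i close] := (dP k).2 psi Ppsi eps eps_gt0.
by exists (pickle (k, i)), (d k i); rewrite /D pickleK.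
Qed.

End Density.

Theorem lemma2p6 (R : realType) (S : forall k : nat, sfun R k -> Prop) :
  (forall k (phi : sfun R k), (0 < k)%N -> S k phi -> is_setfun phi) ->
  (forall k, (0 < k)%N -> exists phi : sfun R k, S k phi) ->
  quotient_closed S ->
  common_lift_property S ->
  exists phi : forall n, sfun R n,
    [/\ forall k, (0 < k)%N -> S k (phi k),
        is_tower phi &
        forall k, (0 < k)%N -> dense_quotients_in k phi (S k)].
Proof.
move=> _ S_ne qc clp.
have [D [D_in D_dense]] := exists_dense_enumeration S_ne.
have [phi1 S1] := S_ne 1%N isT.
have [N [r [Psi [chain Psi_in]]]] := exists_retraction_chain qc clp D_in S1.
have S_tower n : (0 < n)%N -> S n (tower r Psi n).
  move=> n_gt0; have [F ->] := tower_quot chain n_gt0.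
  by have [N_gt0 SPsi _] := Psi_in n; apply: qc.
exists (tower r Psi); split => //; first exact: tower_is_tower chain.
move=> k k_gt0; split => [n F n_gt0|psi Spsi eps eps_gt0].
  by apply: qc => //; apply: S_tower.
have [s [phi [Ds close]]] := D_dense k psi k_gt0 Spsi eps eps_gt0.
have [_ _] := Psi_in s; rewrite Ds => -[F phiE].
exists (N s.+1), F; split; first by have [] := Psi_in s.+1.
by move=> A; rewrite tower_stage // -phiE.
Qed.
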